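(* Let $\Gamma$ be a graph of connectivity $1$. Then $\Gamma$ is arc-transitive if and only if: (1) every lobe of $\Gamma$ is arc-transitive; (2) the lobes of $\Gamma$ are pairwise isomorphic; and (3) all vertices of $\Gamma$ lie in the same number of lobes.
   Context: All graphs are simple, connected, and finite or countably infinite. For edges $e_1,e_2$ write $e_1\cong e_2$ if $e_1=e_2$ or they lie on a common cycle; a lobe is the subgraph induced by an equivalence class (a cut-edge with its ends, or a maximal biconnected subgraph). A connected graph other than $K_2$ has connectivity $1$ iff some vertex lies in at least two lobes. An arc is an ordered pair of adjacent vertices; arc-transitive means the automorphism group acts transitively on arcs. *)

From Stdlib Require Import List Arith Relations.
Import ListNotations.
Set Implicit Arguments.

Section Graphs.
Variable V : Type.
Variable adj : V -> V -> Prop.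

Definition simple_graph : Prop :=
  (forall x y, adj x y -> adj y x) /\ (forall x, ~ adj x x).

Definition countable_vertices : Prop :=
  exists f : V -> nat, forall x y, f x = f y -> x = y.

Definition connected : Prop :=
  (exists v : V, True) /\ forall u v, clos_refl_trans V adj u v.

Definition adj_minus (v : V) (x y : V) : Prop := x <> v /\ y <> v /\ adj x y.

Definition cut_vertex (v : V) : Prop :=
  exists a b, a <> v /\ b <> v /\ ~ clos_refl_trans V (adj_minus v) a b.

(* Vertex connectivity exactly 1: connected, at least two vertices, and either
   Gamma = K2 (exactly two vertices) or removing some vertex disconnects Gamma. *)
Definition connectivity_one : Prop :=
  connected /\ (exists a b : V, a <> b) /\
  ((exists a b : V, forall c, c = a \/ c = b) \/ exists v, cut_vertex v).

Definition is_cycle (l : list V) : Prop :=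
  NoDup l /\ 3 <= length l /\
  forall i d, i < length l -> adj (nth i l d) (nth (S i mod length l) l d).

Definition edge_on_cycle (l : list V) (x y : V) : Prop :=
  exists i, i < length l /\
    ((nth i l x = x /\ nth (S i mod length l) l x = y) \/
     (nth i l x = y /\ nth (S i mod length l) l x = x)).

(* Edges are represented by ordered pairs (x,y) with adj x y; (x,y) and (y,x)
   denote the same edge.  e1 ~= e2 iff e1 = e2 or they lie on a common cycle. *)
Definition edge_equiv (e1 e2 : V * V) : Prop :=
  adj (fst e1) (snd e1) /\ adj (fst e2) (snd e2) /\
  ((e1 = e2 \/ (fst e1, snd e1) = (snd e2, fst e2)) \/
   exists l, is_cycle l /\ edge_on_cycle l (fst e1) (snd e1) /\
             edge_on_cycle l (fst e2) (snd e2)).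

Definition lobe : Type :=
  { C : V * V -> Prop | exists x y, adj x y /\ C = edge_equiv (x, y) }.

Definition lobe_vert (C : lobe) : Type :=
  { v : V | exists w, proj1_sig C (v, w) }.

Definition lobe_adj (C : lobe) (a b : lobe_vert C) : Prop :=
  proj1_sig C (proj1_sig a, proj1_sig b).

Definition lobes_at (v : V) : Type :=
  { C : lobe | exists w, proj1_sig C (v, w) }.

End Graphs.

Definition bijective_map {A B : Type} (f : A -> B) : Prop :=
  exists g : B -> A, (forall a, g (f a) = a) /\ (forall b, f (g b) = b).

Definition is_automorphism {W : Type} (r : W -> W -> Prop) (f : W -> W) : Prop :=
  bijective_map f /\ forall x y, r x y <-> r (f x) (f y).

Definition arc_transitive {W : Type} (r : W -> W -> Prop) : Prop :=
  forall x y x' y', r x y -> r x' y' ->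
    exists f, is_automorphism r f /\ f x = x' /\ f y = y'.

Definition graph_isomorphic {W1 W2 : Type} (r1 : W1 -> W1 -> Prop)
  (r2 : W2 -> W2 -> Prop) : Prop :=
  exists f : W1 -> W2, bijective_map f /\ forall x y, r1 x y <-> r2 (f x) (f y).

Definition same_card (A B : Type) : Prop := exists f : A -> B, bijective_map f.

(* An automorphism maps cycles to cycles, hence lobes onto lobes, and the lobes at a vertex
   onto the lobes at its image; this gives the three conditions.  That lying on a common cycle is
   transitive is the ear argument: if the edge cd lies on a cycle through ab and on one through
   st, the part of the second cycle outside the first is an ear which, spliced into the first
   cycle, gives a cycle through ab and st.

   Conversely, to send an arc xy to an arc x'y', root the graph at x.  Every lobe D has a unique
   entry, the vertex of D nearest to x, and every vertex w <> x has a unique home lobe, the lobe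
   at w through which x is reached; the entry of the home lobe of w is strictly nearer to x than
   w.  The automorphism is built by recursion on the distance to x: the lobe of xy is mapped onto
   the lobe of x'y' by an isomorphism taking xy to x'y' (conditions 1 and 2); once the entry v of
   D has an image v', the lobes at v other than the home lobe of v are matched bijectively with
   the lobes at v' other than the home lobe of v' (condition 3), and D is mapped onto its partner
   by an isomorphism taking v to v'. *)

From Stdlib Require Import List Arith Lia Relations Wf_nat Permutation Classical ClassicalEpsilon ProofIrrelevance FunctionalExtensionality PropExtensionality.
Import ListNotations.
Set Implicit Arguments.
Unset Strict Implicit.

Section Chains.
Variable V : Type.
Implicit Types (r s : V -> V -> Prop) (l : list V).

Fixpoint chain r l : Prop :=
  match l with
  | a :: ((b :: _) as t) => r a b /\ chain r t
  | _ => True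
  end.

Lemma chain_cons2 r a b l : chain r (a :: b :: l) <-> r a b /\ chain r (b :: l).
Proof. reflexivity. Qed.

Lemma chain_app r l1 b l2 :
  chain r (l1 ++ b :: l2) <-> chain r (l1 ++ [b]) /\ chain r (b :: l2).
Proof.
  induction l1 as [|a [|c l1] IH]; simpl in *.
  - destruct l2; simpl; tauto.
  - destruct l2; simpl; tauto.
  - rewrite IH. tauto.
Qed.

Lemma chain_app_inv r l1 l2 : chain r (l1 ++ l2) -> chain r l1 /\ chain r l2.
Proof.
  induction l1 as [|a [|c l1] IH]; simpl in *; intros H.
  - split; auto.
  - split; auto. destruct l2; simpl in *; tauto.
  - destruct H as [H1 H2]. apply IH in H2. tauto.
Qed.

Lemma chain_rev r (Hr : forall x y, r x y -> r y x) l : chain r l -> chain r (rev l).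
Proof.
  induction l as [|a l IH]; simpl; auto. intros H.
  destruct l as [|b l]; simpl; auto.
  apply chain_cons2 in H as [Hab Hl]. specialize (IH Hl). simpl in IH.
  rewrite <- app_assoc. apply chain_app. split; simpl; auto.
Qed.

Lemma chain_mono r s l : (forall x y, r x y -> s x y) -> chain r l -> chain s l.
Proof.
  intros Hrs; induction l as [|a l IH]; simpl; auto.
  destruct l; auto. intros [? ?]; split; auto.
Qed.

Lemma chain_nth r l d : chain r l <-> forall k, S k < length l -> r (nth k l d) (nth (S k) l d).
Proof.
  induction l as [|a [|b l] IH]; simpl in *; split; auto; try lia.
  - intros [Hab Hl] [|k] Hk; simpl; auto. apply IH; auto; simpl; lia.
  - intros H. split. apply (H 0); lia. apply IH. intros k Hk. apply (H (S k)). simpl in *; lia.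
Qed.

Definition consec (a b : V) l : Prop := exists l1 l2, l = l1 ++ a :: b :: l2.

Lemma consec_in a b l : consec a b l -> In a l /\ In b l.
Proof. intros (l1 & l2 & ->). split; apply in_or_app; simpl; auto. Qed.

Lemma consec_rev a b l : consec a b l -> consec b a (rev l).
Proof.
  intros (l1 & l2 & ->). exists (rev l2), (rev l1).
  rewrite rev_app_distr. simpl. rewrite <- !app_assoc. reflexivity.
Qed.

Lemma consec_app_l a b l1 l2 : consec a b l1 -> consec a b (l1 ++ l2).
Proof. intros (m1 & m2 & ->). exists m1, (m2 ++ l2). rewrite <- app_assoc. reflexivity. Qed.

Lemma consec_app_r a b l1 l2 : consec a b l2 -> consec a b (l1 ++ l2).
Proof. intros (m1 & m2 & ->). exists (l1 ++ m1), m2. rewrite <- app_assoc. reflexivity. Qed.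

Lemma consec_nth a b l d k :
  S k < length l -> a = nth k l d -> b = nth (S k) l d -> consec a b l.
Proof.
  revert k; induction l as [|x l IH]; simpl; intros k Hk Ha Hb; [lia|].
  destruct k as [|k].
  - destruct l as [|y l]; simpl in *; [lia|]. subst. exists [], l. reflexivity.
  - destruct (IH k ltac:(lia) Ha Hb) as (m1 & m2 & E). exists (x :: m1), m2. rewrite E; reflexivity.
Qed.

Lemma consec_nth_inv a b l d :
  consec a b l -> exists k, S k < length l /\ nth k l d = a /\ nth (S k) l d = b.
Proof.
  intros (l1 & l2 & ->). exists (length l1). rewrite length_app; simpl. split; [lia|].
  rewrite !app_nth2 by lia. rewrite Nat.sub_diag. replace (S (length l1) - length l1) with 1 by lia.
  simpl; auto.
Qed.

Lemma consec_map {W} (f : V -> W) a b l : consec a b l -> exists m1 m2, map f l = m1 ++ f a :: f b :: m2.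
Proof. intros (l1 & l2 & ->). exists (map f l1), (map f l2). rewrite map_app. reflexivity. Qed.

Lemma last_app_cons l1 a l2 d : last (l1 ++ a :: l2) d = last (a :: l2) d.
Proof.
  induction l1 as [|b [|c l1] IH]; [reflexivity|reflexivity|].
  rewrite <- app_comm_cons. exact IH.
Qed.

Lemma last_indep (a : V) l d1 d2 : last (a :: l) d1 = last (a :: l) d2.
Proof.
  revert a; induction l as [|b l IH]; intros a; [reflexivity|].
  change (last (b :: l) d1 = last (b :: l) d2). apply IH.
Qed.

Lemma clos_rt_chain r u w :
  clos_refl_trans V r u w -> exists p, chain r (u :: p) /\ last (u :: p) u = w.
Proof.
  intros H. apply clos_rt_rtn1 in H. induction H as [|y z Hyz _ (p & Hc & Hl)].
  - exists []. simpl; auto.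
  - exists (p ++ [z]). change (u :: p ++ [z]) with ((u :: p) ++ [z]). rewrite last_last.
    split; auto.
    destruct (@exists_last _ (u :: p)) as (l' & y' & E); [discriminate|].
    rewrite E in *. rewrite last_last in Hl. subst y'.
    rewrite <- app_assoc. apply chain_app. simpl; auto.
Qed.

Lemma chain_clos_rt r u p w : chain r (u :: p) -> In w (u :: p) -> clos_refl_trans V r u w.
Proof.
  revert u; induction p as [|b p IH]; intros u H [<-|Hw].
  - apply rt_refl.
  - destruct Hw.
  - apply rt_refl.
  - destruct H as [Hub Hp]. eapply rt_trans; [apply rt_step; eauto|]. apply IH; auto.
Qed.

Lemma chain_shorten r u p : chain r (u :: p) ->
  exists q, chain r (u :: q) /\ NoDup (u :: q) /\ last (u :: q) u = last (u :: p) u.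
Proof.
  revert u; induction p as [|b p IH]; intros u H.
  - exists []. split; [exact I|split; [repeat constructor; intros []|reflexivity]].
  - destruct H as [Hub Hp]. destruct (IH b Hp) as (q & Hc & Hn & Hl).
    change (last (u :: b :: p) u) with (last (b :: p) u).
    rewrite (last_indep b p u b), <- Hl.
    destruct (classic (In u (b :: q))) as [Hin|Hnin].
    + apply in_split in Hin as (m1 & m2 & E). exists m2. rewrite E in Hc, Hn |- *. split; [|split].
      * apply chain_app_inv in Hc. tauto.
      * apply NoDup_app_remove_l in Hn. auto.
      * rewrite last_app_cons. apply last_indep.
    + exists (b :: q). split; [split; auto|split].
      * constructor; auto.
      * apply (last_indep b q u b).
Qed.

End Chains.

Section Splitting.
Variable V : Type.
Implicit Types (l : list V).

Lemma split_first (P : V -> Prop) l : (exists x, In x l /\ P x) ->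
  exists X y Y, l = X ++ y :: Y /\ P y /\ forall z, In z X -> ~ P z.
Proof.
  induction l as [|h l IH]; intros (x & Hx & Px); [destruct Hx|].
  destruct (classic (P h)).
  - exists [], h, l. repeat split; auto.
  - destruct Hx as [<-|Hx]; [contradiction|].
    destruct IH as (X & y & Y & E & Py & HX); [eauto|].
    exists (h :: X), y, Y. rewrite E. repeat split; auto. intros z [<-|Hz]; auto.
Qed.

Lemma split_last (P : V -> Prop) l : (exists x, In x l /\ P x) ->
  exists Y y Z, l = Y ++ y :: Z /\ P y /\ forall z, In z Z -> ~ P z.
Proof.
  induction l as [|h l IH]; intros (x & Hx & Px); [destruct Hx|].
  destruct (classic (exists x, In x l /\ P x)) as [He|Hne].
  - destruct (IH He) as (Y & y & Z & E & Py & HZ). exists (h :: Y), y, Z. rewrite E. auto.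
  - destruct Hx as [<-|Hx]; [|exfalso; eauto].
    exists [], h, l. repeat split; auto. intros z Hz Pz. apply Hne; eauto.
Qed.

Lemma split_first_last (P : V -> Prop) l c d : In c l -> In d l -> c <> d -> P c -> P d ->
  exists X b M a Z, l = X ++ b :: M ++ a :: Z /\ P b /\ P a /\
    (forall z, In z X -> ~ P z) /\ (forall z, In z Z -> ~ P z).
Proof.
  intros Hc Hd Hcd Pc Pd.
  destruct (split_first (P := P) (l := l)) as (X & b & R & -> & Pb & HX); [eauto|].
  destruct (split_last (P := P) (l := R)) as (M & a & Z & -> & Pa & HZ).
  { apply in_app_or in Hc, Hd.
    destruct Hc as [Hc|[<-|Hc]]; [exfalso; eapply HX; eauto| |eauto].
    destruct Hd as [Hd|[<-|Hd]]; [exfalso; eapply HX; eauto|congruence|eauto]. }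
  exists X, b, M, a, Z. auto 10.
Qed.

Lemma split_two l x y : In x l -> In y l -> x <> y ->
  exists P1 P2 P3, l = P1 ++ x :: P2 ++ y :: P3 \/ l = P1 ++ y :: P2 ++ x :: P3.
Proof.
  intros Hx Hy Hxy. apply in_split in Hx as (A & B & ->).
  apply in_app_or in Hy. destruct Hy as [Hy|[<-|Hy]]; [|congruence|].
  - apply in_split in Hy as (A1 & A2 & ->). exists A1, A2, B. right. rewrite <- app_assoc. reflexivity.
  - apply in_split in Hy as (B1 & B2 & ->). exists A, B1, B2. left. reflexivity.
Qed.

Lemma NoDup_replace_middle (A B C D : list V) : NoDup (A ++ B ++ C) -> NoDup D ->
  (forall z, In z D -> ~ In z (A ++ B ++ C)) -> NoDup (A ++ D ++ C).
Proof.
  intros Hn HD Hdis.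
  assert (HAC : NoDup (A ++ C)).
  { apply (Permutation_NoDup (Permutation_app_swap_app A B C)) in Hn.
    eapply NoDup_app_remove_l; eauto. }
  apply (Permutation_NoDup (Permutation_app_swap_app D A C)). apply NoDup_app; auto.
  intros z Hz Hz'. apply (Hdis z Hz). apply in_app_or in Hz' as [?|?]; apply in_or_app; auto.
  right. apply in_or_app. auto.
Qed.

End Splitting.

Lemma mod_succ (x n : nat) : n <> 0 -> S x mod n = S (x mod n) mod n.
Proof.
  intros Hn. rewrite <- (Nat.add_1_r x), <- (Nat.add_1_r (x mod n)).
  rewrite Nat.Div0.add_mod_idemp_l. reflexivity.
Qed.

Lemma mod_wrap (x n : nat) : n <= x -> x < n + n -> x mod n = x - n.
Proof.
  intros H1 H2. replace x with ((x - n) + 1 * n) at 1 by lia.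
  rewrite Nat.Div0.mod_add. apply Nat.mod_small. lia.
Qed.

Section Rotation.
Variable V : Type.
Implicit Types l : list V.

Definition rotate (m : nat) l : list V := skipn m l ++ firstn m l.

Lemma rotate_perm m l : Permutation l (rotate m l).
Proof. unfold rotate. rewrite <- (firstn_skipn m l) at 1. apply Permutation_app_comm. Qed.

Lemma length_rotate m l : length (rotate m l) = length l.
Proof. symmetry; apply Permutation_length, rotate_perm. Qed.

Lemma nth_rotate m l d k : m <= length l -> k < length l ->
  nth k (rotate m l) d = nth ((m + k) mod length l) l d.
Proof.
  intros Hm Hk. unfold rotate.
  destruct (Nat.lt_ge_cases (m + k) (length l)) as [H|H].
  - rewrite app_nth1 by (rewrite length_skipn; lia).
    rewrite nth_skipn, Nat.mod_small by lia. reflexivity.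
  - rewrite app_nth2 by (rewrite length_skipn; lia). rewrite length_skipn, nth_firstn.
    destruct (Nat.ltb_spec (k - (length l - m)) m); [|lia].
    rewrite mod_wrap by lia. f_equal. lia.
Qed.

Lemma last_nth l d : l <> [] -> last l d = nth (length l - 1) l d.
Proof.
  intros H. destruct (exists_last H) as (l' & z & ->). rewrite last_last, length_app. simpl.
  rewrite app_nth2 by lia. replace (length l' + 1 - 1 - length l') with 0 by lia. reflexivity.
Qed.

End Rotation.

Section Cycles.
Variable V : Type.
Variable adj : V -> V -> Prop.
Hypothesis adj_sym : forall x y, adj x y -> adj y x.

(* [L] runs from [b] to [a]; closed by the edge [ab] it is a cycle through [ab]. *)
Definition cycle_path (a b : V) (L : list V) : Prop :=
  NoDup L /\ 3 <= length L /\ chain adj L /\ hd_error L = Some b /\ last L b = a.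

Lemma cycle_path_rev a b L : cycle_path a b L -> cycle_path b a (rev L).
Proof.
  intros (Hnd & Hlen & Hc & Hh & Hl).
  destruct L as [|z L']; [discriminate|]. simpl in Hh. injection Hh as ->.
  destruct (@exists_last _ (b :: L')) as (l' & y & E); [discriminate|].
  rewrite E in Hl |- *. rewrite last_last in Hl. subst y.
  repeat split.
  - apply NoDup_rev. rewrite <- E. auto.
  - rewrite length_rev, <- E. auto.
  - apply chain_rev; auto. rewrite <- E. auto.
  - rewrite rev_app_distr. reflexivity.
  - rewrite <- E. simpl. apply last_last.
Qed.

Lemma edge_on_cycle_sym (l : list V) a b : edge_on_cycle l a b -> edge_on_cycle l b a.
Proof.
  intros (i & Hi & H). exists i. split; auto.
  assert (Hm : S i mod length l < length l) by (apply Nat.mod_upper_bound; lia).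
  rewrite (nth_indep l b a Hi), (nth_indep l b a Hm). tauto.
Qed.

Lemma cycle_rotate_path (l : list V) i d : is_cycle adj l -> i < length l ->
  cycle_path (nth i l d) (nth (S i mod length l) l d) (rotate (S i) l) /\
  forall k, k < length l -> k <> i ->
    consec (nth k l d) (nth (S k mod length l) l d) (rotate (S i) l).
Proof.
  intros (Hnd & Hlen & Hc) Hi. set (n := length l) in *.
  assert (Hne : rotate (S i) l <> []).
  { intros E. apply (f_equal (@length V)) in E. rewrite length_rotate in E. simpl in E. lia. }
  split; [repeat split|].
  - eapply Permutation_NoDup; [apply rotate_perm|auto].
  - rewrite length_rotate. auto.
  - apply (chain_nth _ _ d). rewrite length_rotate. intros k Hk.
    rewrite !nth_rotate by lia. rewrite Nat.add_succ_r, (mod_succ (S i + k)) by lia.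
    apply Hc, Nat.mod_upper_bound. lia.
  - destruct (rotate (S i) l) as [|z L] eqn:E; [contradiction|]. simpl. f_equal.
    change z with (nth 0 (z :: L) d). rewrite <- E, nth_rotate by lia. rewrite Nat.add_0_r. reflexivity.
  - rewrite last_nth, length_rotate, nth_rotate by (auto; lia). fold n.
    rewrite mod_wrap by lia. replace (S i + (n - 1) - n) with i by lia. apply nth_indep. auto.
  - intros k Hk Hki.
    set (k' := if S i <=? k then k - S i else k + n - S i).
    assert (Hk' : S k' < n /\ (S i + k') mod n = k).
    { unfold k'. destruct (Nat.leb_spec (S i) k).
      - split; [lia|]. rewrite Nat.mod_small by lia. lia.
      - split; [lia|]. rewrite mod_wrap by lia. lia. }
    destruct Hk' as [Hk1 Hk2].
    apply consec_nth with (d := d) (k := k'); [rewrite length_rotate; auto| |];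
      rewrite nth_rotate by lia; fold n.
    + rewrite Hk2. reflexivity.
    + rewrite Nat.add_succ_r, (mod_succ (S i + k')) by lia. rewrite Hk2. reflexivity.
Qed.

Lemma cycle_to_path l a b : is_cycle adj l -> edge_on_cycle l a b ->
  exists L, cycle_path a b L /\ forall c d, edge_on_cycle l c d ->
    (((c, d) = (a, b) \/ (c, d) = (b, a)) \/ consec c d L \/ consec d c L).
Proof.
  intros Hcy (i & Hi & Hab). pose proof Hcy as (_ & Hlen & Hc).
  set (n := length l) in *.
  assert (Hm : S i mod n < n) by (apply Nat.mod_upper_bound; lia).
  destruct (cycle_rotate_path a Hcy Hi) as [HL Hcons]. fold n in HL, Hcons.
  assert (Hedges : forall c d, edge_on_cycle l c d ->
     ((c, d) = (nth i l a, nth (S i mod n) l a) \/ (c, d) = (nth (S i mod n) l a, nth i l a)) \/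
     consec c d (rotate (S i) l) \/ consec d c (rotate (S i) l)).
  { intros c d (k & Hk & Hcd). fold n in Hk, Hcd.
    assert (Hk' : S k mod n < n) by (apply Nat.mod_upper_bound; lia).
    rewrite (nth_indep l c a Hk), (nth_indep l c a Hk') in Hcd.
    destruct (Nat.eq_dec k i) as [->|Hki].
    - left. destruct Hcd as [[<- <-]|[<- <-]]; auto.
    - right. specialize (Hcons k Hk Hki). destruct Hcd as [[<- <-]|[<- <-]]; auto. }
  destruct Hab as [[E1 E2]|[E1 E2]]; rewrite E1, E2 in HL, Hedges.
  - exists (rotate (S i) l). auto.
  - exists (rev (rotate (S i) l)). split; [apply cycle_path_rev; auto|].
    intros c d H. destruct (Hedges c d H) as [HH|[HH|HH]]; [left; tauto|right..].
    + right. apply consec_rev; auto.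
    + left. apply consec_rev; auto.
Qed.

Lemma path_to_cycle a b L : cycle_path a b L -> adj a b ->
  is_cycle adj L /\ edge_on_cycle L a b /\ forall c d, consec c d L -> edge_on_cycle L c d.
Proof.
  intros (Hnd & Hlen & Hc & Hh & Hl) Hab.
  assert (Hne : L <> []) by (intros ->; discriminate).
  assert (Hhd : forall d, nth 0 L d = b) by (destruct L; simpl in *; congruence).
  assert (Hlast : forall d, nth (length L - 1) L d = a).
  { intros d. rewrite <- last_nth by auto. destruct L as [|z L']; [congruence|].
    rewrite (last_indep z L' d b). auto. }
  assert (Hwrap : S (length L - 1) mod length L = 0).
  { replace (S (length L - 1)) with (length L) by lia. apply Nat.Div0.mod_same. }
  split; [|split].
  - repeat split; auto. intros i d Hi.
    destruct (Nat.eq_dec i (length L - 1)) as [->|Hne'].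
    + rewrite Hwrap, Hhd, Hlast. auto.
    + rewrite Nat.mod_small by lia. apply chain_nth; auto. lia.
  - exists (length L - 1). split; [lia|]. left. rewrite Hwrap, Hhd, Hlast. auto.
  - intros c d HC. destruct (consec_nth_inv c HC) as (k & Hk & E1 & E2).
    exists k. split; [lia|]. left. rewrite Nat.mod_small by lia. auto.
Qed.

End Cycles.

Section Ears.
Variable V : Type.
Variable adj : V -> V -> Prop.
Hypothesis adj_sym : forall x y, adj x y -> adj y x.
Hypothesis adj_irrefl : forall x, ~ adj x x.

Definition cycle_related (a b s t : V) : Prop :=
  ((a, b) = (s, t) \/ (a, b) = (t, s)) \/
  exists L, cycle_path adj a b L /\ (consec s t L \/ consec t s L).

Lemma edge_equiv_iff a b c d :
  edge_equiv adj (a, b) (c, d) <-> adj a b /\ adj c d /\ cycle_related a b c d.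
Proof.
  unfold edge_equiv, cycle_related; simpl. split.
  - intros (H1 & H2 & [H3|(l & Hl & E1 & E2)]); repeat split; auto.
    destruct (cycle_to_path adj_sym Hl E1) as (L & HL & HE).
    destruct (HE c d E2) as [[HH|HH]|HH]; [left..|right; exists L; auto];
      injection HH; intros; subst; auto.
  - intros (H1 & H2 & [H3|(L & HL & HC)]); repeat split; auto.
    right. destruct (path_to_cycle HL H1) as (Hc & He & Hcc). exists L. do 2 (split; auto).
    destruct HC as [HC|HC]; auto. apply edge_on_cycle_sym. auto.
Qed.

(* The ear runs from the last vertex of [L] in [P], through the closing edge [st], to the first. *)
Lemma cycle_path_ear (P : V -> Prop) s t L c d :
  adj s t -> cycle_path adj s t L -> In c L -> In d L -> c <> d -> P c -> P d ->
  exists x I y, P x /\ P y /\ x <> y /\ NoDup I /\ (forall z, In z I -> ~ P z) /\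
    chain adj (x :: I ++ [y]) /\ consec s t (x :: I ++ [y]) /\ (I = [] -> x = s /\ y = t).
Proof.
  intros Hst (Nd & _ & C & Hd & Hl) Hc Hd' Hcd Pc Pd.
  destruct (split_first_last Hc Hd' Hcd Pc Pd) as (X & y & M & x & Z & -> & Py & Px & HX & HZ).
  assert (HXt : exists W, X ++ [y] = t :: W).
  { destruct X as [|x0 X']; simpl in Hd |- *; injection Hd as ->; eauto. }
  destruct HXt as (W & EX).
  destruct (@exists_last _ (x :: Z)) as (W' & s' & EW); [discriminate|].
  assert (Hs' : s' = s).
  { rewrite <- Hl, last_app_cons, app_comm_cons, last_app_cons, EW, last_last. reflexivity. }
  subst s'.
  assert (Hear : x :: (Z ++ X) ++ [y] = W' ++ s :: t :: W).
  { rewrite <- app_assoc, app_comm_cons, EW, EX, <- app_assoc. reflexivity. }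
  exists x, (Z ++ X), y.
  refine (conj Px (conj Py (conj _ (conj _ (conj _ (conj _ (conj _ _))))))).
  - intros ->. apply NoDup_remove_2 in Nd. apply Nd. apply in_or_app. right.
    apply in_or_app. right. left. auto.
  - apply (NoDup_app_remove_l (y :: M ++ [x])).
    apply (Permutation_NoDup (Permutation_app_rot X (y :: M ++ [x]) Z)).
    simpl. rewrite <- app_assoc. exact Nd.
  - intros z Hz. apply in_app_or in Hz as [?|?]; auto.
  - rewrite Hear. apply chain_app. split.
    + rewrite <- EW. replace (X ++ y :: M ++ x :: Z) with ((X ++ y :: M) ++ x :: Z) in C
        by (rewrite <- app_assoc; reflexivity).
      apply chain_app in C. tauto.
    + apply chain_cons2. split; auto. rewrite <- EX. apply chain_app in C. tauto.
  - rewrite Hear. exists W', W. reflexivity.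
  - intros HI. apply app_eq_nil in HI as [-> ->]. simpl in *. injection Hd as ->.
    split; auto. destruct W' as [|w [|]]; simpl in EW; injection EW; congruence.
Qed.

Lemma cycle_path_splice a b P1 x P2 y P3 I :
  cycle_path adj a b (P1 ++ x :: P2 ++ y :: P3) -> chain adj (x :: I ++ [y]) -> NoDup I ->
  (forall z, In z I -> ~ In z (P1 ++ x :: P2 ++ y :: P3)) ->
  (P1 = [] /\ I = [] /\ P3 = [] /\ b = x /\ a = y) \/ cycle_path adj a b (P1 ++ x :: I ++ y :: P3).
Proof.
  intros (Hnd & Hlen & Hc & Hh & Hl) HcI HndI HdI.
  assert (Hnd' : NoDup (P1 ++ x :: I ++ y :: P3)).
  { apply (Permutation_NoDup (Permutation_middle2 P1 I P3 x y)).
    apply (Permutation_NoDup (Permutation_sym (Permutation_middle2 P1 P2 P3 x y))) in Hnd.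
    apply (@NoDup_replace_middle _ (x :: y :: P1) P2 P3 I); auto.
    intros z Hz Hz'. apply (HdI z Hz).
    apply (Permutation_in _ (Permutation_middle2 P1 P2 P3 x y)). exact Hz'. }
  assert (Hc' : chain adj (P1 ++ x :: I ++ y :: P3)).
  { apply chain_app in Hc as [C1 C2]. apply chain_app. split; auto.
    change (x :: I ++ y :: P3) with ((x :: I) ++ y :: P3).
    change (x :: P2 ++ y :: P3) with ((x :: P2) ++ y :: P3) in C2.
    apply chain_app in C2 as [_ C3]. apply chain_app. auto. }
  assert (Hh' : hd_error (P1 ++ x :: I ++ y :: P3) = Some b) by (destruct P1; exact Hh).
  assert (Hl' : last (P1 ++ x :: I ++ y :: P3) b = a).
  { rewrite <- Hl, !last_app_cons, !app_comm_cons, !last_app_cons. reflexivity. }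
  destruct (Nat.lt_ge_cases (length (P1 ++ x :: I ++ y :: P3)) 3) as [Hs|Hs]; [left|right].
  - rewrite length_app in Hs. simpl in Hs. rewrite length_app in Hs. simpl in Hs.
    destruct P1, I, P3; simpl in *; try lia.
    injection Hh as ->. repeat split; auto.
  - repeat split; auto.
Qed.

(* Splice the ear of [L2] relative to [L1] into [L1] between its two ends. *)
Lemma cycle_path_trans a b s t c d L1 L2 : adj a b -> adj s t -> adj c d ->
  cycle_path adj a b L1 -> (consec c d L1 \/ consec d c L1) ->
  cycle_path adj s t L2 -> (consec c d L2 \/ consec d c L2) -> cycle_related a b s t.
Proof.
  intros Hab Hst Hcd H1 Hc1 H2 Hc2.
  assert (Hne : c <> d) by (intros ->; eapply adj_irrefl; eauto).
  assert (Hin1 : In c L1 /\ In d L1) by (destruct Hc1 as [K|K]; apply consec_in in K; tauto).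
  assert (Hin2 : In c L2 /\ In d L2) by (destruct Hc2 as [K|K]; apply consec_in in K; tauto).
  destruct (@cycle_path_ear (fun z => In z L1) s t L2 c d Hst H2 (proj1 Hin2) (proj2 Hin2) Hne
              (proj1 Hin1) (proj2 Hin1)) as (x & I & y & Hx & Hy & Hxy & HndI & HdI & HcI & Hst' & Hdeg).
  destruct (split_two Hx Hy Hxy) as (P1 & P2 & P3 & [EL|EL]); subst L1.
  - destruct (cycle_path_splice H1 HcI HndI HdI) as [(-> & HI & -> & -> & ->)|HCP].
    + left. destruct (Hdeg HI) as [-> ->]. auto.
    + right. exists (P1 ++ x :: I ++ y :: P3). split; auto. left.
      apply consec_app_r. replace (x :: I ++ y :: P3) with ((x :: I ++ [y]) ++ P3)
        by (simpl; rewrite <- app_assoc; reflexivity).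
      apply consec_app_l. auto.
  - assert (HcI' : chain adj (y :: rev I ++ [x])).
    { apply chain_rev in HcI; auto. simpl in HcI. rewrite rev_app_distr in HcI. exact HcI. }
    assert (HdI' : forall z, In z (rev I) -> ~ In z (P1 ++ y :: P2 ++ x :: P3))
      by (intros z Hz; apply HdI, in_rev; auto).
    destruct (cycle_path_splice H1 HcI' (NoDup_rev HndI) HdI') as [(-> & HI & -> & -> & ->)|HCP].
    + left. destruct (Hdeg ltac:(destruct I; [auto|simpl in HI; destruct (rev I); discriminate]))
        as [-> ->]. auto.
    + right. exists (P1 ++ y :: rev I ++ x :: P3). split; auto. right.
      apply consec_app_r. replace (y :: rev I ++ x :: P3) with ((y :: rev I ++ [x]) ++ P3)
        by (simpl; rewrite <- app_assoc; reflexivity).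
      apply consec_app_l. apply consec_rev in Hst'. simpl in Hst'. rewrite rev_app_distr in Hst'.
      exact Hst'.
Qed.

End Ears.

Section Lobes.
Variable V : Type.
Variable adj : V -> V -> Prop.
Hypothesis adj_sym : forall x y, adj x y -> adj y x.
Hypothesis adj_irrefl : forall x, ~ adj x x.

Notation EE := (edge_equiv adj).

Lemma edge_equiv_sym e1 e2 : EE e1 e2 -> EE e2 e1.
Proof.
  destruct e1 as [a b], e2 as [c d]. unfold edge_equiv; simpl.
  intros (H1 & H2 & [[H|H]|(l & Hl & E1 & E2)]); (split; [auto|split; [auto|]]).
  - left; left; congruence.
  - left; right. injection H; intros; subst; auto.
  - right. exists l; auto.
Qed.

Lemma edge_equiv_swap_l a b e : EE (a, b) e -> EE (b, a) e.
Proof.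
  destruct e as [c d]. unfold edge_equiv; simpl.
  intros (H1 & H2 & [[H|H]|(l & Hl & E1 & E2)]); (split; [auto|split; [auto|]]).
  - left; right. injection H; intros; subst; auto.
  - left; left. injection H; intros; subst; auto.
  - right. exists l. split; auto. split; auto. apply edge_on_cycle_sym; auto.
Qed.

Lemma edge_equiv_swap_r a b e : EE e (a, b) -> EE e (b, a).
Proof. intros H. apply edge_equiv_sym, edge_equiv_swap_l, edge_equiv_sym, H. Qed.

Lemma edge_equiv_refl a b : adj a b -> EE (a, b) (a, b).
Proof. intros H. split; [auto|split; [auto|]]. left; left; auto. Qed.

Lemma edge_equiv_adj_r a b e : EE e (a, b) -> adj a b.
Proof. intros (_ & H & _). exact H. Qed.

Lemma edge_equiv_trans e1 e2 e3 : EE e1 e2 -> EE e2 e3 -> EE e1 e3.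
Proof.
  destruct e1 as [a b], e2 as [c d], e3 as [s t]. intros H12 H23.
  pose proof H12 as K12. pose proof H23 as K23. apply edge_equiv_sym in H23.
  apply edge_equiv_iff in H12 as (Hab & Hcd & Q1); auto.
  apply edge_equiv_iff in H23 as (Hst & _ & Q2); auto.
  destruct Q1 as [[E|E]|(L1 & HL1 & HC1)]; [injection E; intros; subst; auto|
    injection E; intros; subst; apply edge_equiv_swap_l; auto|].
  destruct Q2 as [[E|E]|(L2 & HL2 & HC2)]; [injection E; intros; subst; auto|
    injection E; intros; subst; apply edge_equiv_swap_r; auto|].
  apply edge_equiv_iff; auto. split; [auto|split; [auto|]].
  eapply cycle_path_trans with (L1 := L1) (L2 := L2) (c := c) (d := d); eauto.
Qed.

Definition lobe_of (a b : V) (H : adj a b) : lobe adj :=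
  exist _ (EE (a, b)) (ex_intro _ a (ex_intro _ b (conj H eq_refl))).

Definition in_lobe (C : lobe adj) (e : V * V) : Prop := proj1_sig C e.

Definition on_lobe (C : lobe adj) (v : V) : Prop := exists w, in_lobe C (v, w).

Lemma in_lobe_of a b (H : adj a b) : in_lobe (lobe_of H) (a, b).
Proof. apply edge_equiv_refl; auto. Qed.

Lemma in_lobe_adj (C : lobe adj) u w : in_lobe C (u, w) -> adj u w.
Proof. destruct C as [P (x & y & Hxy & ->)]. apply edge_equiv_adj_r. Qed.

Lemma in_lobe_sym (C : lobe adj) u w : in_lobe C (u, w) -> in_lobe C (w, u).
Proof. destruct C as [P (x & y & Hxy & ->)]. apply edge_equiv_swap_r. Qed.

Lemma on_lobe_of_arc (C : lobe adj) a b : in_lobe C (a, b) -> on_lobe C a /\ on_lobe C b.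
Proof. intros H. split; [exists b|exists a; apply in_lobe_sym]; auto. Qed.

Lemma lobe_has_vertex (C : lobe adj) : exists a, on_lobe C a.
Proof. destruct C as [P (x & y & Hxy & ->)]. exists x, y. apply edge_equiv_refl; auto. Qed.

Lemma in_lobe_class (C : lobe adj) u w : in_lobe C (u, w) -> proj1_sig C = EE (u, w).
Proof.
  destruct C as [P (x & y & Hxy & ->)]; simpl. intros H.
  apply functional_extensionality. intros e. apply propositional_extensionality. split.
  - apply edge_equiv_trans, edge_equiv_sym, H.
  - apply edge_equiv_trans, H.
Qed.

Lemma lobe_ext (C D : lobe adj) : proj1_sig C = proj1_sig D -> C = D.
Proof.
  destruct C as [P HP], D as [Q HQ]; simpl. intros ->. f_equal. apply proof_irrelevance.
Qed.

Lemma lobe_eq_of_arc (C D : lobe adj) e : in_lobe C e -> in_lobe D e -> C = D.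
Proof.
  destruct e as [u w]. intros H1 H2. apply lobe_ext.
  rewrite (in_lobe_class H1), (in_lobe_class H2). reflexivity.
Qed.

Lemma in_lobe_equiv (C : lobe adj) u w e : in_lobe C (u, w) -> EE (u, w) e -> in_lobe C e.
Proof. intros H1 H2. unfold in_lobe. rewrite (in_lobe_class H1). auto. Qed.

End Lobes.

Section Branches.
Variable V : Type.
Variable adj : V -> V -> Prop.
Hypothesis adj_sym : forall x y, adj x y -> adj y x.
Hypothesis adj_irrefl : forall x, ~ adj x x.

Notation EE := (edge_equiv adj).
Notation avoid a := (clos_refl_trans V (adj_minus adj a)).

Lemma avoid_sym a x y : avoid a x y -> avoid a y x.
Proof.
  induction 1 as [x y (? & ? & ?)| |]; [apply rt_step; repeat split; auto|apply rt_refl|].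
  eapply rt_trans; eauto.
Qed.

Lemma avoid_ne a u w : avoid a u w -> u <> a -> w <> a.
Proof. intros H. apply clos_rt_rtn1 in H. destruct H as [|y z (? & ? & ?) _]; auto. Qed.

Lemma chain_adj_minus_notin a u q : chain (adj_minus adj a) (u :: q) -> u <> a ->
  forall z, In z (u :: q) -> z <> a.
Proof.
  revert u; induction q as [|b q IH]; intros u H Hu z [<-|Hz]; auto.
  destruct H as [(_ & Hb & _) H]. apply (IH b H Hb z Hz).
Qed.

Lemma chain_adj_minus a l : chain adj l -> (forall z, In z l -> z <> a) -> chain (adj_minus adj a) l.
Proof.
  induction l as [|x [|y l] IH]; simpl; auto.
  intros [H1 H2] H3. repeat split; auto. apply IH; auto.
Qed.

Lemma walk_from_neighbour a z : clos_refl_trans V adj a z ->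
  z = a \/ exists u, adj a u /\ avoid a u z.
Proof.
  intros H. apply clos_rt_rtn1 in H. induction H as [|y z Hyz _ IH]; auto.
  destruct (classic (z = a)) as [->|Hza]; auto. right.
  destruct IH as [->|(u & Hu & Hw)].
  - exists z. split; auto. apply rt_refl.
  - exists u. split; auto. eapply rt_trans; eauto. apply rt_step. repeat split; auto.
    apply (avoid_ne Hw). intros ->. apply (adj_irrefl Hu).
Qed.

Lemma connected_neighbour : (forall u v, clos_refl_trans V adj u v) -> (exists a b : V, a <> b) ->
  forall z, exists z', adj z z'.
Proof.
  intros Hc (p & q & Hpq) z.
  assert (exists w, w <> z) as [w Hw] by (destruct (classic (p = z)); [exists q|exists p]; congruence).
  destruct (walk_from_neighbour (Hc z w)) as [->|(z' & Hz' & _)]; [congruence|eauto].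
Qed.

Lemma cycle_path_avoid a u L v : cycle_path adj a u L -> In v L -> v <> a -> avoid a u v.
Proof.
  intros (Hnd & Hlen & Hc & Hh & Hl) Hv Hva.
  destruct L as [|u0 L']; [discriminate|]. injection Hh as ->.
  destruct (@exists_last _ (u :: L')) as (R & z & E); [discriminate|].
  rewrite E in Hl, Hv, Hnd, Hc. rewrite last_last in Hl. subst z.
  assert (HvR : In v R) by (apply in_app_or in Hv as [?|[?|[]]]; congruence).
  assert (HaR : ~ In a R) by (apply NoDup_remove_2 in Hnd; rewrite app_nil_r in Hnd; exact Hnd).
  apply chain_app_inv in Hc as [Hc _].
  destruct R as [|r R']; [destruct HvR|].
  assert (r = u) by (destruct L'; injection E; intros; subst; auto; destruct R'; discriminate).
  subst r. apply chain_clos_rt with (p := R'); auto.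
  apply chain_adj_minus; auto. intros z Hz ->. auto.
Qed.

Lemma edge_equiv_of_avoid a u u' : adj a u -> adj a u' -> u <> u' -> avoid a u u' ->
  EE (a, u) (a, u').
Proof.
  intros Hu Hu' Hne H.
  destruct (clos_rt_chain H) as (p & Hc & Hl).
  destruct (chain_shorten Hc) as (q & Hq & Hnd & Hlq). rewrite Hl in Hlq.
  assert (Hnot : forall z, In z (u :: q) -> z <> a).
  { apply (chain_adj_minus_notin Hq). intros ->. apply (adj_irrefl Hu). }
  destruct (@exists_last _ (u :: q)) as (l' & z & E); [discriminate|].
  rewrite E, last_last in Hlq. subst z. rewrite E in Hq, Hnd, Hnot.
  apply chain_mono with (s := adj) in Hq; [|intros ? ? (_ & _ & ?); auto].
  apply edge_equiv_iff; auto. repeat split; auto. right.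
  exists ((l' ++ [u']) ++ [a]). split.
  - repeat split.
    + apply NoDup_app; [auto|repeat constructor; intros []|].
      intros z Hz [Ez|[]]. exact (Hnot z Hz (eq_sym Ez)).
    + rewrite !length_app. simpl. destruct l' as [|? [|]]; simpl in *; try lia.
      injection E; intros; subst. contradiction.
    + rewrite <- app_assoc. apply chain_app. split; auto. simpl. auto.
    + rewrite <- E. reflexivity.
    + apply last_last.
  - right. exists l', []. rewrite <- app_assoc. reflexivity.
Qed.

Definition branch (a : V) (C : lobe adj) (w : V) : Prop :=
  exists u, in_lobe C (a, u) /\ avoid a u w.

Lemma branch_ne a C w : branch a C w -> w <> a.
Proof.
  intros (u & Hu & Hw). apply (avoid_ne Hw). intros ->. apply (adj_irrefl (in_lobe_adj Hu)).
Qed.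

Lemma branch_step a C w w' : branch a C w -> avoid a w w' -> branch a C w'.
Proof. intros (u & Hu & Hw) H. exists u. split; auto. eapply rt_trans; eauto. Qed.

Lemma branch_on_lobe a C w : branch a C w -> on_lobe C a.
Proof. intros (u & Hu & _). exists u; auto. Qed.

Lemma branch_lobe_unique a C D w : branch a C w -> branch a D w -> C = D.
Proof.
  intros (u & Hu & Hw) (u' & Hu' & Hw').
  destruct (classic (u = u')) as [<-|Hne]; [eapply lobe_eq_of_arc; eauto|].
  assert (H : avoid a u u') by (eapply rt_trans; [exact Hw|apply avoid_sym; exact Hw']).
  apply lobe_eq_of_arc with (e := (a, u')); auto.
  eapply in_lobe_equiv; eauto. apply edge_equiv_of_avoid; auto; eapply in_lobe_adj; eauto.
Qed.

Lemma branch_exists a w : clos_refl_trans V adj a w -> w <> a -> exists C, branch a C w.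
Proof.
  intros H Hne. destruct (walk_from_neighbour H) as [->|(u & Hu & Hw)]; [congruence|].
  exists (lobe_of Hu), u. split; auto. apply in_lobe_of.
Qed.

Lemma branch_of_on_lobe (C : lobe adj) a v : on_lobe C a -> on_lobe C v -> a <> v -> branch a C v.
Proof.
  intros (u & Hu) (t & Ht) Hav. exists u. split; auto.
  assert (HE : EE (a, u) (v, t)) by (rewrite <- (in_lobe_class adj_sym adj_irrefl Hu); auto).
  apply edge_equiv_iff in HE as (Hau & Hvt & [[E|E]|(L & HL & HC)]); auto.
  - injection E; intros; subst. congruence.
  - injection E; intros; subst. apply rt_refl.
  - eapply cycle_path_avoid; eauto. destruct HC as [K|K]; apply consec_in in K; tauto.
Qed.

Lemma avoid_or_hit p q s t : avoid p s t -> s <> q -> (avoid q s t /\ t <> q) \/ avoid p s q.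
Proof.
  intros H Hsq. apply clos_rt_rtn1 in H. induction H as [|y z Hyz Hrt IH].
  - left. split; auto. apply rt_refl.
  - destruct IH as [[H1 H2]|H1]; [|right; auto].
    destruct (classic (z = q)) as [->|Hzq].
    + right. eapply rt_trans; [apply clos_rtn1_rt; exact Hrt|apply rt_step; auto].
    + left. split; auto. eapply rt_trans; eauto. apply rt_step.
      destruct Hyz as (? & ? & ?). repeat split; auto.
Qed.

End Branches.

Lemma sig_ext {A} (P : A -> Prop) (x y : sig P) : proj1_sig x = proj1_sig y -> x = y.
Proof. destruct x, y; simpl; intros ->. f_equal. apply proof_irrelevance. Qed.

Section Embedding.
Variable V : Type.
Variable adj : V -> V -> Prop.
Hypothesis adj_sym : forall x y, adj x y -> adj y x.
Variable g : V -> V.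
Hypothesis g_inj : forall x y, g x = g y -> x = y.
Hypothesis g_adj : forall x y, adj x y -> adj (g x) (g y).

Lemma chain_map l : chain adj l -> chain adj (map g l).
Proof. induction l as [|a [|b l] IH]; simpl in *; auto. intros [H1 H2]. split; [auto|apply IH; auto]. Qed.

Lemma last_map l d : last (map g l) (g d) = g (last l d).
Proof. induction l as [|a [|b l] IH]; simpl in *; auto. Qed.

Lemma cycle_path_map a b L : cycle_path adj a b L -> cycle_path adj (g a) (g b) (map g L).
Proof.
  intros (Hnd & Hlen & Hc & Hhd & Hl). repeat split.
  - apply NoDup_map_NoDup_ForallPairs; auto. intros x y _ _. apply g_inj.
  - rewrite length_map; auto.
  - apply chain_map; auto.
  - destruct L; simpl in *; congruence.
  - rewrite last_map. congruence.
Qed.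

Lemma edge_equiv_map a b c d :
  edge_equiv adj (a, b) (c, d) -> edge_equiv adj (g a, g b) (g c, g d).
Proof.
  intros H. apply edge_equiv_iff in H as (H1 & H2 & Q); auto. apply edge_equiv_iff; auto.
  split; [auto|split; [auto|]].
  destruct Q as [[E|E]|(L & HL & HC)]; [left; left|left; right|right].
  - injection E; intros; subst; auto.
  - injection E; intros; subst; auto.
  - exists (map g L). split; [apply cycle_path_map; auto|].
    destruct HC as [HC|HC]; [left|right]; apply consec_map; auto.
Qed.

End Embedding.

Section Automorphism.
Variable V : Type.
Variable adj : V -> V -> Prop.
Hypothesis adj_sym : forall x y, adj x y -> adj y x.
Variables g h : V -> V.
Hypothesis gh : forall x, g (h x) = x.
Hypothesis hg : forall x, h (g x) = x.
Hypothesis g_adj : forall x y, adj x y <-> adj (g x) (g y).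

Lemma h_adj x y : adj x y <-> adj (h x) (h y).
Proof. rewrite (g_adj (h x) (h y)), !gh. reflexivity. Qed.

Lemma edge_equiv_auto a b c d :
  edge_equiv adj (a, b) (c, d) <-> edge_equiv adj (g a, g b) (g c, g d).
Proof.
  assert (g_inj : forall x y, g x = g y -> x = y).
  { intros x y E. rewrite <- (hg x), <- (hg y), E. reflexivity. }
  assert (h_inj : forall x y, h x = h y -> x = y).
  { intros x y E. rewrite <- (gh x), <- (gh y), E. reflexivity. }
  split; intros H.
  - apply edge_equiv_map; auto. intros x y. apply g_adj.
  - apply edge_equiv_map with (g := h) in H; auto; [|intros x y; apply h_adj].
    rewrite !hg in H. exact H.
Qed.

Definition lobe_image (C : lobe adj) : lobe adj.
Proof.
  exists (fun e => in_lobe C (h (fst e), h (snd e))).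
  destruct C as [P (x & y & Hxy & ->)]. exists (g x), (g y). split; [apply (proj1 (g_adj x y)), Hxy|].
  apply functional_extensionality. intros [a b]. apply propositional_extensionality. simpl.
  rewrite (edge_equiv_auto x y (h a) (h b)), !gh. reflexivity.
Defined.

Lemma in_lobe_image C a b : in_lobe (lobe_image C) (g a, g b) <-> in_lobe C (a, b).
Proof. unfold in_lobe; simpl. rewrite !hg. reflexivity. Qed.

Lemma lobe_image_of_arc (adj_irrefl : forall x, ~ adj x x) (C D : lobe adj) x y :
  in_lobe C (x, y) -> in_lobe D (g x, g y) -> lobe_image C = D.
Proof.
  intros HC HD. apply lobe_eq_of_arc with (e := (g x, g y)); auto.
  apply in_lobe_image. exact HC.
Qed.

End Automorphism.

Lemma lobe_image_inv V (adj : V -> V -> Prop) (adj_sym : forall x y, adj x y -> adj y x)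
  (g h : V -> V) (gh : forall x, g (h x) = x) (hg : forall x, h (g x) = x)
  (g_adj : forall x y, adj x y <-> adj (g x) (g y))
  (h_adj : forall x y, adj x y <-> adj (h x) (h y)) (C : lobe adj) :
  lobe_image adj_sym hg gh h_adj (lobe_image adj_sym gh hg g_adj C) = C.
Proof.
  apply lobe_ext. apply functional_extensionality. intros [a b].
  apply propositional_extensionality. unfold in_lobe; simpl. rewrite !hg. reflexivity.
Qed.

Section Forward.
Variable V : Type.
Variable adj : V -> V -> Prop.
Hypothesis adj_sym : forall x y, adj x y -> adj y x.
Hypothesis adj_irrefl : forall x, ~ adj x x.
Hypothesis adj_at : arc_transitive adj.

Lemma arc_transitive_inverse x y x' y' : adj x y -> adj x' y' ->
  exists g h, (forall a, g (h a) = a) /\ (forall a, h (g a) = a) /\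
    (forall a b, adj a b <-> adj (g a) (g b)) /\ g x = x' /\ g y = y'.
Proof.
  intros H1 H2. destruct (adj_at H1 H2) as (f & ((f' & E1 & E2) & Hf) & F1 & F2).
  exists f, f'. auto.
Qed.

Definition restrict_map (C D : lobe adj) (g : V -> V)
  (HG : forall a b, in_lobe C (a, b) -> in_lobe D (g a, g b)) (z : lobe_vert C) : lobe_vert D :=
  exist _ (g (proj1_sig z)) (let (w, Hw) := proj2_sig z in ex_intro _ (g w) (HG _ _ Hw)).

Lemma restrict_iso (C D : lobe adj) (g h : V -> V) :
  (forall x, g (h x) = x) -> (forall x, h (g x) = x) ->
  (forall a b, in_lobe C (a, b) <-> in_lobe D (g a, g b)) ->
  exists F : lobe_vert C -> lobe_vert D, bijective_map F /\
    (forall x y, lobe_adj x y <-> lobe_adj (F x) (F y)) /\ forall z, proj1_sig (F z) = g (proj1_sig z).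
Proof.
  intros gh hg HG.
  assert (HG1 : forall a b, in_lobe C (a, b) -> in_lobe D (g a, g b)) by (intros; apply HG; auto).
  assert (HG2 : forall a b, in_lobe D (a, b) -> in_lobe C (h a, h b)).
  { intros a b H. apply HG. rewrite !gh. auto. }
  exists (restrict_map HG1). split; [|split].
  - exists (restrict_map HG2). split; intros; apply sig_ext; simpl; auto.
  - intros [x Hx] [y Hy]. apply HG.
  - reflexivity.
Qed.

Lemma arc_transitive_lobe (C : lobe adj) : arc_transitive (@lobe_adj V adj C).
Proof.
  intros [a Ha] [b Hb] [a' Ha'] [b' Hb'] Hab Hab'. unfold lobe_adj in Hab, Hab'; simpl in *.
  destruct (arc_transitive_inverse (in_lobe_adj Hab) (in_lobe_adj Hab'))
    as (g & h & gh & hg & g_adj & E1 & E2).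
  assert (HC : lobe_image adj_sym gh hg g_adj C = C).
  { apply lobe_image_of_arc with (x := a) (y := b); auto. rewrite E1, E2. exact Hab'. }
  destruct (@restrict_iso C C g h gh hg) as (F & HF & HFa & HFv).
  { intros u w. rewrite <- (in_lobe_image adj_sym gh hg g_adj), HC. reflexivity. }
  exists F. split; [split; auto|split; apply sig_ext; rewrite HFv; simpl; auto].
Qed.

Lemma lobes_isomorphic (C D : lobe adj) : graph_isomorphic (@lobe_adj V adj C) (@lobe_adj V adj D).
Proof.
  destruct (lobe_has_vertex C) as (x & y & Hxy), (lobe_has_vertex D) as (x' & y' & Hxy').
  destruct (arc_transitive_inverse (in_lobe_adj Hxy) (in_lobe_adj Hxy'))
    as (g & h & gh & hg & g_adj & E1 & E2).
  assert (HC : lobe_image adj_sym gh hg g_adj C = D).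
  { apply lobe_image_of_arc with (x := x) (y := y); auto. rewrite E1, E2. exact Hxy'. }
  destruct (@restrict_iso C D g h gh hg) as (F & HF & HFa & _).
  { intros u w. rewrite <- (in_lobe_image adj_sym gh hg g_adj), HC. reflexivity. }
  exists F. auto.
Qed.

Lemma lobes_at_same_card (no_isolated : forall z, exists z', adj z z') (u v : V) :
  same_card (lobes_at adj u) (lobes_at adj v).
Proof.
  destruct (no_isolated u) as (u1 & Hu1), (no_isolated v) as (v1 & Hv1).
  destruct (arc_transitive_inverse Hu1 Hv1) as (g & h & gh & hg & g_adj & E1 & _).
  set (I := lobe_image adj_sym gh hg g_adj).
  set (J := lobe_image adj_sym hg gh (h_adj gh g_adj)).
  assert (HI : forall C : lobe adj, on_lobe C u -> on_lobe (I C) v).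
  { intros C (w & Hw). exists (g w). rewrite <- E1. apply in_lobe_image. exact Hw. }
  assert (HJ : forall C : lobe adj, on_lobe C v -> on_lobe (J C) u).
  { intros C (w & Hw). exists (h w). rewrite <- (hg u), E1. apply in_lobe_image. exact Hw. }
  exists (fun c => exist _ (I (proj1_sig c)) (HI _ (proj2_sig c))).
  exists (fun c => exist _ (J (proj1_sig c)) (HJ _ (proj2_sig c))).
  split; intros [C HC]; apply sig_ext; apply lobe_image_inv.
Qed.

End Forward.

Definition bij_on {A B : Type} (P : A -> Prop) (Q : B -> Prop) (f : A -> B) : Prop :=
  (forall x, P x -> Q (f x)) /\ (forall x y, P x -> P y -> f x = f y -> x = y) /\
  (forall y, Q y -> exists x, P x /\ f x = y).

Section Extension.
Variable A : Type.
Variables P Q : A -> Prop.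
Variable F : sig P -> sig Q.

Definition extend (x : A) : A :=
  match excluded_middle_informative (P x) with
  | left H => proj1_sig (F (exist _ x H))
  | right _ => x
  end.

Lemma extend_val x (H : P x) : extend x = proj1_sig (F (exist _ x H)).
Proof.
  unfold extend. destruct (excluded_middle_informative (P x)) as [H'|H']; [|contradiction].
  rewrite (proof_irrelevance _ H' H). reflexivity.
Qed.

Lemma bij_on_extend : bijective_map F -> bij_on P Q extend.
Proof.
  intros (G & GF & FG). split; [|split].
  - intros x Hx. rewrite (extend_val Hx). apply proj2_sig.
  - intros x y Hx Hy E. rewrite (extend_val Hx), (extend_val Hy) in E.
    apply sig_ext, (f_equal G) in E. rewrite !GF in E. injection E; auto.
  - intros y Hy. exists (proj1_sig (G (exist _ y Hy))). split; [apply proj2_sig|].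
    rewrite (extend_val (proj2_sig _)), <- sig_eta, FG. reflexivity.
Qed.

End Extension.

(* Exchanging [q] with [f p] in the range of [f]. *)
Lemma bij_on_remove {A B : Type} (P : A -> Prop) (Q : B -> Prop) f p q :
  bij_on P Q f -> P p -> Q q ->
  exists f', bij_on (fun x => P x /\ x <> p) (fun y => Q y /\ y <> q) f'.
Proof.
  intros (Hmap & Hinj & Hsurj) Hp Hq.
  exists (fun x => if excluded_middle_informative (f x = q) then f p else f x).
  split; [|split].
  - intros x [Hx Hxp]. destruct (excluded_middle_informative (f x = q)) as [E|E].
    + split; auto. intros E'. apply Hxp, Hinj; congruence.
    + auto.
  - intros x y [Hx Hxp] [Hy Hyp].
    destruct (excluded_middle_informative (f x = q)), (excluded_middle_informative (f y = q));
      intros E.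
    + apply Hinj; congruence.
    + exfalso. apply Hyp, Hinj; auto.
    + exfalso. apply Hxp, Hinj; auto.
    + apply Hinj; auto.
  - intros y [Hy Hyq]. destruct (classic (y = f p)) as [->|Hyp].
    + destruct (Hsurj q Hq) as (x & Hx & Ex). exists x. repeat split; auto.
      * intros ->. congruence.
      * destruct (excluded_middle_informative (f x = q)); congruence.
    + destruct (Hsurj y Hy) as (x & Hx & <-). exists x. repeat split; auto.
      * intros ->. congruence.
      * destruct (excluded_middle_informative (f x = q)); congruence.
Qed.

Section LobeMaps.
Variable V : Type.
Variable adj : V -> V -> Prop.
Hypothesis adj_sym : forall x y, adj x y -> adj y x.

Definition lobe_iso (D D' : lobe adj) (psi : V -> V) : Prop :=
  bij_on (on_lobe D) (on_lobe D') psi /\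
  forall u w, on_lobe D u -> on_lobe D w -> (in_lobe D (u, w) <-> in_lobe D' (psi u, psi w)).

Lemma lobe_iso_of_arcs (D D' : lobe adj) a b a' b' : in_lobe D (a, b) -> in_lobe D' (a', b') ->
  graph_isomorphic (@lobe_adj V adj D) (@lobe_adj V adj D') -> arc_transitive (@lobe_adj V adj D') ->
  exists psi, lobe_iso D D' psi /\ psi a = a' /\ psi b = b'.
Proof.
  intros Hab Hab' (F0 & (G0 & GF0 & FG0) & HF0) Hat.
  destruct (on_lobe_of_arc adj_sym Hab) as [Ha Hb]. destruct (on_lobe_of_arc adj_sym Hab') as [Ha' Hb'].
  destruct (Hat (F0 (exist _ a Ha)) (F0 (exist _ b Hb)) (exist _ a' Ha') (exist _ b' Hb'))
    as (A & ((A' & AA' & A'A) & HA) & E1 & E2); [apply HF0; exact Hab|exact Hab'|].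
  set (F := fun z => A (F0 z) : lobe_vert D').
  assert (HF : bijective_map F).
  { exists (fun z => G0 (A' z)). unfold F. split; intros; rewrite ?AA', ?GF0, ?FG0, ?A'A; auto. }
  exists (extend F). split; [split|split].
  - apply bij_on_extend, HF.
  - intros u w Hu Hw. rewrite (extend_val F Hu), (extend_val F Hw).
    unfold F. rewrite (HF0 (exist _ u Hu) (exist _ w Hw)). apply HA.
  - rewrite (extend_val F Ha). exact (f_equal (@proj1_sig _ _) E1).
  - rewrite (extend_val F Hb). exact (f_equal (@proj1_sig _ _) E2).
Qed.

Lemma lobes_at_bij_except v v' (P P' : lobe adj) : on_lobe P v -> on_lobe P' v' ->
  same_card (lobes_at adj v) (lobes_at adj v') ->
  exists s, bij_on (fun D => on_lobe D v /\ D <> P) (fun D' => on_lobe D' v' /\ D' <> P') s.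
Proof.
  intros HP HP' (beta & Hbeta).
  apply (bij_on_remove (f := extend beta)); auto.
  apply (bij_on_extend (P := fun D => on_lobe D v) (Q := fun D => on_lobe D v')). exact Hbeta.
Qed.

End LobeMaps.

Lemma least_nat (P : nat -> Prop) : (exists n, P n) -> exists n, P n /\ forall m, P m -> n <= m.
Proof.
  intros H. destruct (dec_inh_nat_subset_has_unique_least_element P (fun n => classic (P n)) H)
    as (n & [Hn Hmin] & _).
  eauto.
Qed.

Section Rooted.
Variable V : Type.
Variable adj : V -> V -> Prop.
Hypothesis adj_sym : forall x y, adj x y -> adj y x.
Hypothesis adj_irrefl : forall x, ~ adj x x.
Hypothesis adj_connected : forall u v, clos_refl_trans V adj u v.
Variable r : V.

Notation avoid a := (clos_refl_trans V (adj_minus adj a)).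
Notation branch := (branch (adj := adj)).

Inductive walk_from_root : nat -> V -> Prop :=
| walk_root : walk_from_root 0 r
| walk_step n u w : walk_from_root n u -> adj u w -> walk_from_root (S n) w.

Lemma walk_from_root_exists w : exists n, walk_from_root n w.
Proof.
  pose proof (adj_connected r w) as H. apply clos_rt_rtn1 in H.
  induction H as [|y z Hyz _ [n Hn]]; [exists 0; constructor|exists (S n); econstructor; eauto].
Qed.

Definition dist (w : V) : nat :=
  proj1_sig (constructive_indefinite_description _ (least_nat (walk_from_root_exists w))).

Lemma dist_spec w : walk_from_root (dist w) w /\ forall m, walk_from_root m w -> dist w <= m.
Proof. unfold dist. destruct (constructive_indefinite_description _ _) as [n Hn]. exact Hn. Qed.

Lemma dist_pred w : w <> r -> exists u, adj u w /\ dist u < dist w.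
Proof.
  intros Hw. destruct (dist_spec w) as [H1 _]. remember (dist w) as n.
  destruct H1 as [|n u w Hu Huw]; [congruence|].
  exists u. split; auto. destruct (dist_spec u) as [_ H2]. specialize (H2 n Hu). lia.
Qed.

Lemma avoid_root_of_dist_lt a u : dist u < dist a -> avoid a u r.
Proof.
  remember (dist u) as n. revert u Heqn.
  induction n as [n IH] using (well_founded_induction lt_wf). intros u En Hlt.
  destruct (classic (u = r)) as [->|Hur]; [apply rt_refl|].
  destruct (dist_pred Hur) as (u' & Hu' & Hlt').
  apply rt_trans with u'; [|apply (IH (dist u')); auto; lia].
  apply rt_step. repeat split; auto; intros ->; lia.
Qed.

Lemma dist_lt_of_not_avoid a u : u <> a -> ~ avoid a u r -> dist a < dist u.
Proof.
  remember (dist u) as n. revert u Heqn.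
  induction n as [n IH] using (well_founded_induction lt_wf). intros u En Hua Hno.
  destruct (classic (u = r)) as [->|Hur]; [exfalso; apply Hno, rt_refl|].
  destruct (dist_pred Hur) as (u' & Hu' & Hlt').
  destruct (classic (u' = a)) as [->|Hu'a]; [lia|].
  enough (dist a < dist u') by lia.
  apply (IH (dist u') ltac:(lia) u'); auto. intros K. apply Hno. eapply rt_trans; [|exact K].
  apply rt_step. repeat split; auto.
Qed.

(* Witness: a vertex of [D] nearest to the root. *)
Lemma entry_exists (D : lobe adj) : exists a, on_lobe D a /\ ~ branch a D r.
Proof.
  destruct (@least_nat (fun n => exists a, on_lobe D a /\ dist a = n)) as (n & (a & Ha & <-) & Hmin).
  { destruct (lobe_has_vertex D) as [a Ha]. eauto. }
  exists a. split; auto. intros HB.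
  destruct (dist_pred (not_eq_sym (branch_ne adj_irrefl HB))) as (u & Hu & Hlt).
  assert (Hau : adj a u) by auto.
  assert (HF : branch a (lobe_of Hau) r).
  { exists u. split; [apply in_lobe_of; auto|]. apply avoid_root_of_dist_lt; auto. }
  rewrite <- (branch_lobe_unique adj_sym adj_irrefl HF HB) in Hmin.
  specialize (Hmin (dist u)). enough (dist a <= dist u) by lia.
  apply Hmin. exists u. split; auto. apply (on_lobe_of_arc adj_sym (in_lobe_of Hau)).
Qed.

Lemma entry_unique (D : lobe adj) a a' :
  on_lobe D a -> ~ branch a D r -> on_lobe D a' -> ~ branch a' D r -> a = a'.
Proof.
  intros Ha HBa Ha' HBa'. apply NNPP. intros Hne.
  destruct (classic (r = a)) as [<-|Hra]; [apply HBa', branch_of_on_lobe; auto|].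
  destruct (classic (r = a')) as [<-|Hra']; [apply HBa, branch_of_on_lobe; auto|].
  destruct (branch_exists adj_irrefl (adj_connected a' r) Hra') as (F & u' & Hu' & Hw).
  assert (HFD : F <> D) by (intros ->; apply HBa'; exists u'; auto).
  assert (Hside : branch a' D a) by (apply branch_of_on_lobe; auto).
  apply HFD. apply (branch_lobe_unique adj_sym adj_irrefl (a := a') (w := a)); [|exact Hside].
  destruct (classic (u' = a)) as [->|Hu'a]; [exists a; split; auto; apply rt_refl|].
  destruct (avoid_or_hit Hw Hu'a) as [[K1 _]|K2]; [|exists u'; auto].
  exfalso. apply HBa. apply branch_step with u'; auto.
  apply branch_step with a'; [apply branch_of_on_lobe; auto|].
  apply rt_step. repeat split; auto. apply (in_lobe_adj Hu').
Qed.

Definition entry (D : lobe adj) : V :=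
  proj1_sig (constructive_indefinite_description _ (entry_exists D)).

Lemma entry_spec D : on_lobe D (entry D) /\ ~ branch (entry D) D r.
Proof. unfold entry. destruct (constructive_indefinite_description _ _) as [a Ha]. exact Ha. Qed.

Lemma entry_on_lobe D : on_lobe D (entry D).
Proof. apply entry_spec. Qed.

Lemma entry_eq D a : on_lobe D a -> ~ branch a D r -> entry D = a.
Proof. intros. destruct (entry_spec D). eapply entry_unique; eauto. Qed.

Lemma branch_root_of_not_entry D a : on_lobe D a -> a <> entry D -> branch a D r.
Proof. intros Ha Hne. apply NNPP. intros K. apply Hne. symmetry. apply entry_eq; auto. Qed.

Lemma entry_of_root D : on_lobe D r -> entry D = r.
Proof. intros HD. apply entry_eq; auto. intros K. apply (branch_ne adj_irrefl K). reflexivity. Qed.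

Variable C0 : lobe adj.
Hypothesis C0_root : on_lobe C0 r.

Lemma home_exists w : w <> r -> exists C, branch w C r.
Proof. intros Hw. apply (branch_exists adj_irrefl (adj_connected w r)). auto. Qed.

Definition home (w : V) : lobe adj :=
  match excluded_middle_informative (w = r) with
  | left _ => C0
  | right Hne => proj1_sig (constructive_indefinite_description _ (home_exists Hne))
  end.

Lemma home_root : home r = C0.
Proof. unfold home. destruct (excluded_middle_informative (r = r)); congruence. Qed.

Lemma home_branch w : w <> r -> branch w (home w) r.
Proof.
  intros Hw. unfold home. destruct (excluded_middle_informative (w = r)); [congruence|].
  destruct (constructive_indefinite_description _ _). exact b.
Qed.

Lemma home_on_lobe w : on_lobe (home w) w.
Proof.
  destruct (classic (w = r)) as [->|Hw]; [rewrite home_root; auto|].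
  apply (branch_on_lobe (home_branch Hw)).
Qed.

Lemma home_of_not_entry D w : on_lobe D w -> w <> entry D -> w <> r /\ home w = D.
Proof.
  intros Hw Hne. assert (Hwr : w <> r) by (intros ->; apply Hne; symmetry; apply entry_of_root; auto).
  split; auto. apply (branch_lobe_unique adj_sym adj_irrefl (home_branch Hwr)).
  apply branch_root_of_not_entry; auto.
Qed.

Lemma entry_home_ne w : w <> r -> entry (home w) <> w.
Proof. intros Hw E. apply (proj2 (entry_spec (home w))). rewrite E. apply home_branch, Hw. Qed.

Lemma entry_of_not_home D w : on_lobe D w -> D <> home w -> entry D = w.
Proof. intros Hw Hne. apply NNPP. intros K. apply Hne. symmetry. apply (home_of_not_entry Hw). auto. Qed.

Lemma dist_entry_home w : w <> r -> dist (entry (home w)) < dist w.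
Proof.
  intros Hw. pose proof (entry_home_ne Hw) as Hne. destruct (entry_spec (home w)) as [Ha HBa].
  apply dist_lt_of_not_avoid; auto. intros K. apply HBa.
  apply branch_step with w; auto. apply branch_of_on_lobe; auto. apply home_on_lobe.
Qed.

Lemma entry_home_root : entry C0 = r.
Proof. apply entry_of_root, C0_root. Qed.

End Rooted.

Section Backward.
Variable V : Type.
Variable adj : V -> V -> Prop.
Hypothesis adj_sym : forall x y, adj x y -> adj y x.
Hypothesis adj_irrefl : forall x, ~ adj x x.
Hypothesis adj_connected : forall u v, clos_refl_trans V adj u v.
Hypothesis lobe_arc_transitive : forall C : lobe adj, arc_transitive (@lobe_adj V adj C).
Hypothesis lobe_isomorphic :
  forall C D : lobe adj, graph_isomorphic (@lobe_adj V adj C) (@lobe_adj V adj D).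
Hypothesis lobes_at_card : forall u v : V, same_card (lobes_at adj u) (lobes_at adj v).
Variables x y x' y' : V.
Hypothesis Hxy : adj x y.
Hypothesis Hxy' : adj x' y'.

Definition C1 : lobe adj := lobe_of Hxy.
Definition C2 : lobe adj := lobe_of Hxy'.

Lemma C1_x : on_lobe C1 x. Proof. exists y. apply in_lobe_of. Qed.
Lemma C1_y : on_lobe C1 y. Proof. exists x. apply (in_lobe_sym adj_sym), in_lobe_of. Qed.
Lemma C2_x' : on_lobe C2 x'. Proof. exists y'. apply in_lobe_of. Qed.

Notation entry1 := (entry adj_sym adj_irrefl adj_connected x).
Notation entry2 := (entry adj_sym adj_irrefl adj_connected x').
Notation home1 := (home adj_irrefl adj_connected x C1).
Notation home2 := (home adj_irrefl adj_connected x' C2).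
Notation dist1 := (dist adj_connected x).
Notation dist2 := (dist adj_connected x').

Lemma entry1_on D : on_lobe D (entry1 D). Proof. apply entry_on_lobe. Qed.
Lemma entry2_on D : on_lobe D (entry2 D). Proof. apply entry_on_lobe. Qed.
Lemma home1_on w : on_lobe (home1 w) w. Proof. apply home_on_lobe, C1_x. Qed.
Lemma home2_on w : on_lobe (home2 w) w. Proof. apply home_on_lobe, C2_x'. Qed.
Lemma home1_root : home1 x = C1. Proof. apply home_root. Qed.
Lemma home2_root : home2 x' = C2. Proof. apply home_root. Qed.
Lemma entry1_C1 : entry1 C1 = x. Proof. apply entry_home_root, C1_x. Qed.
Lemma entry2_C2 : entry2 C2 = x'. Proof. apply entry_home_root, C2_x'. Qed.
Lemma entry1_home_ne w : w <> x -> entry1 (home1 w) <> w. Proof. apply entry_home_ne. Qed.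
Lemma entry2_home_ne w : w <> x' -> entry2 (home2 w) <> w. Proof. apply entry_home_ne. Qed.
Lemma dist1_entry_home w : w <> x -> dist1 (entry1 (home1 w)) < dist1 w.
Proof. apply dist_entry_home, C1_x. Qed.
Lemma dist2_entry_home w : w <> x' -> dist2 (entry2 (home2 w)) < dist2 w.
Proof. apply dist_entry_home, C2_x'. Qed.
Lemma home1_of_not_entry D w : on_lobe D w -> w <> entry1 D -> w <> x /\ home1 w = D.
Proof. apply home_of_not_entry. Qed.
Lemma home2_of_not_entry D w : on_lobe D w -> w <> entry2 D -> w <> x' /\ home2 w = D.
Proof. apply home_of_not_entry. Qed.
Lemma entry1_of_not_home D w : on_lobe D w -> D <> home1 w -> entry1 D = w.
Proof. apply entry_of_not_home. Qed.
Lemma entry2_of_not_home D w : on_lobe D w -> D <> home2 w -> entry2 D = w.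
Proof. apply entry_of_not_home. Qed.

Lemma iso_at_exists (D : lobe adj) v (D' : lobe adj) v' :
  exists psi, on_lobe D v -> on_lobe D' v' -> lobe_iso D D' psi /\ psi v = v'.
Proof.
  destruct (classic (on_lobe D v /\ on_lobe D' v')) as [[(b & Hb) (b' & Hb')]|Hno].
  - destruct (lobe_iso_of_arcs adj_sym Hb Hb' (@lobe_isomorphic D D') (@lobe_arc_transitive D'))
      as (psi & Hp & E & _).
    exists psi; auto.
  - exists (fun z => z). intros; exfalso; auto.
Qed.

Definition iso_at D v D' v' : V -> V :=
  proj1_sig (constructive_indefinite_description _ (iso_at_exists D v D' v')).

Lemma iso_at_spec D v D' v' : on_lobe D v -> on_lobe D' v' ->
  lobe_iso D D' (iso_at D v D' v') /\ iso_at D v D' v' v = v'.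
Proof. unfold iso_at. destruct (constructive_indefinite_description _ _) as [psi Hpsi]. exact Hpsi. Qed.

Definition psi0 : V -> V :=
  proj1_sig (constructive_indefinite_description _
    (lobe_iso_of_arcs adj_sym (in_lobe_of Hxy) (in_lobe_of Hxy') (@lobe_isomorphic C1 C2)
      (@lobe_arc_transitive C2))).

Lemma psi0_spec : lobe_iso C1 C2 psi0 /\ psi0 x = x' /\ psi0 y = y'.
Proof. unfold psi0. destruct (constructive_indefinite_description _ _) as [psi Hpsi]. exact Hpsi. Qed.

Lemma match_at_exists v (P : lobe adj) v' (P' : lobe adj) : exists s, on_lobe P v -> on_lobe P' v' ->
  bij_on (fun D => on_lobe D v /\ D <> P) (fun D' => on_lobe D' v' /\ D' <> P') s.
Proof.
  destruct (classic (on_lobe P v /\ on_lobe P' v')) as [[Hp Hp']|Hno].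
  - destruct (lobes_at_bij_except Hp Hp' (lobes_at_card v v')) as [s Hs]. exists s; auto.
  - exists (fun z => z). intros; exfalso; auto.
Qed.

Definition match_at v P v' P' : lobe adj -> lobe adj :=
  proj1_sig (constructive_indefinite_description _ (match_at_exists v P v' P')).

Lemma match_at_spec v P v' P' : on_lobe P v -> on_lobe P' v' ->
  bij_on (fun D => on_lobe D v /\ D <> P) (fun D' => on_lobe D' v' /\ D' <> P') (match_at v P v' P').
Proof. unfold match_at. destruct (constructive_indefinite_description _ _) as [s Hs]. exact Hs. Qed.

(* [p] is the image of the entry [v] of [D]: the vertex [phi v] and the lobe onto which
   [home1 v] is mapped. *)
Definition lobe_map_at (v : V) (p : V * lobe adj) (D : lobe adj) : lobe adj :=
  if excluded_middle_informative (D = home1 v) then snd p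
  else match_at v (home1 v) (fst p) (snd p) D.

Definition lobe_fun_at (v : V) (p : V * lobe adj) (D : lobe adj) : V -> V :=
  if excluded_middle_informative (D = C1) then psi0
  else iso_at D v (lobe_map_at v p D) (fst p).

(* Recursion on [dist1 w], run with fuel: any fuel above [dist1 w] gives the same value. *)
Fixpoint build (k : nat) (w : V) : V * lobe adj :=
  match k with
  | 0 => (x', C2)
  | S k =>
      if excluded_middle_informative (w = x) then (x', C2)
      else let D := home1 w in let v := entry1 D in let p := build k v in
           (lobe_fun_at v p D w, lobe_map_at v p D)
  end.

Lemma build_stable k1 : forall k2 w, dist1 w < k1 -> dist1 w < k2 -> build k1 w = build k2 w.
Proof.
  induction k1 as [|j1 IH]; intros [|j2] w H1 H2; try lia. simpl.
  destruct (excluded_middle_informative (w = x)) as [E|E]; auto.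
  pose proof (dist1_entry_home E). rewrite (IH j2); auto; lia.
Qed.

Definition image (w : V) : V * lobe adj := build (S (dist1 w)) w.
Definition phi (w : V) : V := fst (image w).
Definition phi_home (w : V) : lobe adj := snd (image w).
Definition lobe_map (D : lobe adj) : lobe adj := lobe_map_at (entry1 D) (image (entry1 D)) D.
Definition lobe_fun (D : lobe adj) : V -> V := lobe_fun_at (entry1 D) (image (entry1 D)) D.

Lemma image_root : image x = (x', C2).
Proof. unfold image. simpl. destruct (excluded_middle_informative (x = x)); congruence. Qed.

Lemma image_eq w : w <> x -> image w = (lobe_fun (home1 w) w, lobe_map (home1 w)).
Proof.
  intros Hw. unfold image. simpl. destruct (excluded_middle_informative (w = x)); [congruence|].
  pose proof (dist1_entry_home Hw).
  rewrite (@build_stable (dist1 w) (S (dist1 (entry1 (home1 w))))) by lia. reflexivity.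
Qed.

Lemma phi_root : phi x = x'. Proof. unfold phi. rewrite image_root. reflexivity. Qed.
Lemma phi_home_root : phi_home x = C2. Proof. unfold phi_home. rewrite image_root. reflexivity. Qed.
Lemma phi_eq w : w <> x -> phi w = lobe_fun (home1 w) w.
Proof. intros. unfold phi. rewrite image_eq; auto. Qed.
Lemma phi_home_eq w : w <> x -> phi_home w = lobe_map (home1 w).
Proof. intros. unfold phi_home. rewrite image_eq; auto. Qed.

Definition home_compatible (w : V) : Prop := phi_home w = home2 (phi w) /\ (w = x <-> phi w = x').

Definition lobe_map_spec (D : lobe adj) : Prop :=
  let v := entry1 D in
  lobe_iso D (lobe_map D) (lobe_fun D) /\ lobe_fun D v = phi v /\ entry2 (lobe_map D) = phi v /\
  (D = C1 \/
   (D <> home1 v /\ lobe_map D = match_at v (home1 v) (phi v) (home2 (phi v)) D /\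
    lobe_map D <> home2 (phi v))).

Lemma lobe_map_root : lobe_map C1 = C2.
Proof.
  unfold lobe_map, lobe_map_at. rewrite entry1_C1, image_root, home1_root.
  destruct (excluded_middle_informative (C1 = C1)); [reflexivity|congruence].
Qed.

Lemma lobe_fun_root : lobe_fun C1 = psi0.
Proof. unfold lobe_fun, lobe_fun_at. destruct (excluded_middle_informative (C1 = C1)); congruence. Qed.

Lemma lobe_map_spec_root : lobe_map_spec C1.
Proof.
  destruct psi0_spec as (Hiso & Hx & _).
  unfold lobe_map_spec. rewrite lobe_map_root, lobe_fun_root, entry1_C1, phi_root, entry2_C2. auto.
Qed.

Lemma lobe_map_spec_other D : D <> C1 -> home_compatible (entry1 D) -> lobe_map_spec D.
Proof.
  intros HD1 [Hhome _]. set (v := entry1 D) in *.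
  assert (HvD : on_lobe D v) by apply entry1_on.
  assert (ND : D <> home1 v).
  { intros ED. assert (Hvx : v = x) by (apply NNPP; intros K; apply (entry1_home_ne K); rewrite <- ED; reflexivity).
    apply HD1. rewrite ED, Hvx. apply home1_root. }
  assert (HL : lobe_map D = match_at v (home1 v) (phi v) (home2 (phi v)) D).
  { unfold lobe_map, lobe_map_at. fold v. destruct (excluded_middle_informative (D = home1 v)); [contradiction|].
    change (snd (image v)) with (phi_home v). rewrite Hhome. reflexivity. }
  destruct (match_at_spec (home1_on v) (home2_on (phi v))) as (Hmap & _ & _).
  destruct (Hmap D (conj HvD ND)) as [K1 K2]. rewrite <- HL in K1, K2.
  assert (HF : lobe_fun D = iso_at D v (lobe_map D) (phi v)).
  { unfold lobe_fun, lobe_fun_at. destruct (excluded_middle_informative (D = C1)); [contradiction|].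
    reflexivity. }
  destruct (iso_at_spec HvD K1) as [P1 P2]. rewrite <- HF in P1, P2.
  unfold lobe_map_spec. fold v.
  split; [exact P1|split; [exact P2|split; [apply entry2_of_not_home; auto|right; auto]]].
Qed.

Lemma lobe_map_spec_step D : home_compatible (entry1 D) -> lobe_map_spec D.
Proof.
  destruct (classic (D = C1)) as [->|HD]; [intros; apply lobe_map_spec_root|].
  apply lobe_map_spec_other, HD.
Qed.

Lemma home_compatible_all w : home_compatible w.
Proof.
  remember (dist1 w) as n. revert w Heqn.
  induction n as [n IH] using (well_founded_induction lt_wf). intros w En.
  destruct (classic (w = x)) as [->|Hw].
  { unfold home_compatible. rewrite phi_home_root, phi_root, home2_root. split; tauto. }
  set (D := home1 w). set (v := entry1 D).
  assert (Hv : home_compatible v) by (apply (IH (dist1 v)); [subst; apply dist1_entry_home|]; auto).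
  destruct (lobe_map_spec_step Hv) as (((Hmap & Hinj & _) & _) & Ev & Env & _).
  fold v in Ev, Env.
  assert (Hwv : phi w <> phi v).
  { rewrite (phi_eq Hw), <- Ev. intros K. apply (entry1_home_ne Hw). symmetry.
    apply (Hinj w v); auto; [apply home1_on|apply entry1_on]. }
  assert (Hin : on_lobe (lobe_map D) (phi w)) by (rewrite (phi_eq Hw); apply Hmap, home1_on).
  destruct (home2_of_not_entry Hin) as [K1 K2]; [congruence|].
  split; [rewrite (phi_home_eq Hw); auto|split; intros; contradiction].
Qed.

Lemma lobe_map_spec_all D : lobe_map_spec D.
Proof. apply lobe_map_spec_step, home_compatible_all. Qed.

Lemma phi_on_lobe D u : on_lobe D u -> phi u = lobe_fun D u.
Proof.
  intros Hu. destruct (classic (u = entry1 D)) as [->|Hne].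
  - symmetry. apply (lobe_map_spec_all D).
  - destruct (home1_of_not_entry Hu Hne) as [Hux <-]. apply phi_eq, Hux.
Qed.

Lemma phi_root_iff w : w = x <-> phi w = x'.
Proof. apply home_compatible_all. Qed.

Lemma lobe_map_home w : lobe_map (home1 w) = home2 (phi w).
Proof.
  rewrite <- (proj1 (home_compatible_all w)).
  destruct (classic (w = x)) as [->|Hw]; [|symmetry; apply phi_home_eq, Hw].
  rewrite phi_home_root, home1_root. apply lobe_map_root.
Qed.

Lemma lobe_map_inj D1 D2 : entry1 D1 = entry1 D2 -> lobe_map D1 = lobe_map D2 -> D1 = D2.
Proof.
  intros Ev EL.
  destruct (lobe_map_spec_all D1) as (_ & _ & _ & [->|(B1 & B2 & B3)]);
  destruct (lobe_map_spec_all D2) as (_ & _ & _ & [->|(B1' & B2' & B3')]).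
  - reflexivity.
  - exfalso. apply B3'. rewrite <- EL, lobe_map_root, <- Ev, entry1_C1, phi_root, home2_root. reflexivity.
  - exfalso. apply B3. rewrite EL, lobe_map_root, Ev, entry1_C1, phi_root, home2_root. reflexivity.
  - set (v := entry1 D1) in *.
    destruct (match_at_spec (home1_on v) (home2_on (phi v))) as (_ & Hinj & _).
    apply Hinj; [split; auto; apply entry1_on|split; [rewrite Ev; apply entry1_on|congruence]|].
    rewrite <- B2, EL, B2', Ev. reflexivity.
Qed.

Lemma phi_inj u w : phi u = phi w -> u = w.
Proof.
  remember (dist1 u) as n. revert u w Heqn.
  induction n as [n IH] using (well_founded_induction lt_wf). intros u w En E.
  destruct (classic (u = x)) as [->|Hu]; [symmetry; apply phi_root_iff; rewrite <- E; apply phi_root|].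
  destruct (classic (w = x)) as [->|Hw]; [apply phi_root_iff; rewrite E; apply phi_root|].
  assert (EL : lobe_map (home1 u) = lobe_map (home1 w)) by (rewrite !lobe_map_home, E; reflexivity).
  destruct (lobe_map_spec_all (home1 u)) as (((_ & Hinj & _) & _) & _ & Env1 & _).
  destruct (lobe_map_spec_all (home1 w)) as (_ & _ & Env2 & _).
  assert (ED : home1 u = home1 w).
  { apply lobe_map_inj; auto. apply (IH (dist1 (entry1 (home1 u)))); auto.
    - subst. apply dist1_entry_home, Hu.
    - rewrite <- Env1, <- Env2, EL. reflexivity. }
  rewrite (phi_eq Hu), (phi_eq Hw), <- ED in E.
  apply Hinj; auto; [apply home1_on|rewrite ED; apply home1_on].
Qed.

Lemma lobe_map_onto (D' : lobe adj) v : phi v = entry2 D' -> exists D, entry1 D = v /\ lobe_map D = D'.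
Proof.
  intros Hv. destruct (classic (D' = home2 (phi v))) as [ED|ND].
  - assert (Hvx : v = x).
    { apply phi_root_iff, NNPP. intros K. apply (entry2_home_ne K). rewrite <- ED. auto. }
    subst v. exists C1. split; [apply entry1_C1|].
    rewrite ED, phi_root, home2_root. apply lobe_map_root.
  - destruct (match_at_spec (home1_on v) (home2_on (phi v))) as (_ & _ & Hsurj).
    destruct (Hsurj D') as (D & [HD ND'] & ES); [split; auto; rewrite Hv; apply entry2_on|].
    assert (EE1 : entry1 D = v) by (apply entry1_of_not_home; auto).
    exists D. split; auto.
    destruct (lobe_map_spec_all D) as (_ & _ & _ & [K1|(_ & K & _)]).
    + exfalso. apply ND'. rewrite <- EE1, K1, entry1_C1, home1_root. reflexivity.
    + rewrite K, EE1. exact ES.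
Qed.

Lemma phi_surj z : exists w, phi w = z.
Proof.
  remember (dist2 z) as n. revert z Heqn.
  induction n as [n IH] using (well_founded_induction lt_wf). intros z En.
  destruct (classic (z = x')) as [->|Hz]; [exists x; apply phi_root|].
  destruct (IH (dist2 (entry2 (home2 z))) ltac:(subst; apply dist2_entry_home, Hz) _ eq_refl)
    as [v Hv].
  destruct (lobe_map_onto Hv) as (D & ED & LD).
  destruct (lobe_map_spec_all D) as (((_ & _ & Hsurj) & _) & _).
  destruct (Hsurj z) as (a & Ha & Ea); [rewrite LD; apply home2_on|].
  exists a. rewrite (phi_on_lobe Ha). exact Ea.
Qed.

Lemma phi_adj u w : adj u w <-> adj (phi u) (phi w).
Proof.
  split; intros Huw.
  - destruct (on_lobe_of_arc adj_sym (in_lobe_of Huw)) as [Iu Iw].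
    rewrite (phi_on_lobe Iu), (phi_on_lobe Iw).
    destruct (lobe_map_spec_all (lobe_of Huw)) as ((_ & Hiso) & _).
    apply (in_lobe_adj (C := lobe_map (lobe_of Huw))), Hiso; auto. apply in_lobe_of.
  - assert (HE : in_lobe (lobe_of Huw) (phi u, phi w)) by apply in_lobe_of.
    destruct (on_lobe_of_arc adj_sym HE) as [Iu Iw].
    destruct (phi_surj (entry2 (lobe_of Huw))) as [v Hv].
    destruct (lobe_map_onto Hv) as (D & _ & ED). rewrite <- ED in HE, Iu, Iw.
    destruct (lobe_map_spec_all D) as (((_ & _ & Hsurj) & Hiso) & _).
    destruct (Hsurj _ Iu) as (u1 & Hu1 & Eu1), (Hsurj _ Iw) as (w1 & Hw1 & Ew1).
    rewrite <- (phi_on_lobe Hu1) in Eu1. rewrite <- (phi_on_lobe Hw1) in Ew1.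
    apply phi_inj in Eu1, Ew1. subst u1 w1.
    apply (in_lobe_adj (C := D)), Hiso; auto.
    rewrite <- !phi_on_lobe by auto. exact HE.
Qed.

Lemma phi_y : phi y = y'.
Proof.
  rewrite (phi_on_lobe C1_y), lobe_fun_root. apply psi0_spec.
Qed.

Lemma phi_automorphism : is_automorphism adj phi.
Proof.
  split; [|apply phi_adj].
  exists (fun z => proj1_sig (constructive_indefinite_description _ (phi_surj z))).
  split; intros a; destruct (constructive_indefinite_description _ _) as [w Hw]; simpl; auto.
  apply phi_inj. exact Hw.
Qed.

End Backward.

Unset Implicit Arguments.
Set Strict Implicit.

Theorem theorem5p1 (V : Type) (adj : V -> V -> Prop)
  (Hsimple : simple_graph adj) (Hcount : countable_vertices V)
  (Hconn : connectivity_one adj) :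
  arc_transitive adj <->
  ((forall C : lobe adj, arc_transitive (@lobe_adj V adj C)) /\
   (forall C D : lobe adj, graph_isomorphic (@lobe_adj V adj C) (@lobe_adj V adj D)) /\
   (forall u v : V, same_card (lobes_at adj u) (lobes_at adj v))).
Proof.
  destruct Hsimple as [adj_sym adj_irrefl].
  destruct Hconn as ((_ & adj_connected) & Htwo & _).
  split.
  - intros Hat. split; [|split].
    + apply arc_transitive_lobe; auto.
    + apply lobes_isomorphic; auto.
    + apply lobes_at_same_card; auto. apply connected_neighbour; auto.
  - intros (Hlobe_at & Hlobe_iso & Hcard) x y x' y' Hxy Hxy'.
    exists (phi adj_sym adj_irrefl adj_connected Hlobe_at Hlobe_iso Hcard Hxy Hxy').
    split; [apply phi_automorphism|split; [apply phi_root|apply phi_y]].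
Qed.
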